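(* Let $n\in\mathbb N$, let $K_1,\dots,K_n$ be singular kernel functions and let $J$ be an arbitrary $n$-field function. Let $\mathbf y\in\overline S$ and let $j\in\{0,1,\dots,n\}$ be such that $m_j(\mathbf y)\ne-\infty$. Then there exist $\delta>0$ and a closed interval $W\subseteq[0,1]$ with the following properties for every $\mathbf x\in\overline S$ with $\|\mathbf x-\mathbf y\|\le\delta$: (i) $W\subseteq I_j(\mathbf x)$, and every point of $W$ has distance at least $\delta$ from the set $\{x_1,\dots,x_n\}$; (ii) $m_j(\mathbf x)=\sup_{t\in W}F(\mathbf x,t)$.
   Context: A kernel function is a function $K:(-1,0)\cup(0,1)\to\mathbb R$ that is concave on $(-1,0)$ and concave on $(0,1)$ and satisfies $\lim_{t\downarrow0}K(t)=\lim_{t\uparrow0}K(t)$. It is extended to $[-1,1]$ with values in $[-\infty,\infty)$ by its one-sided limits at $-1,0,1$. A kernel function is singular if $K(0)=-\infty$. An $n$-field function is a function $J:[0,1]\to[-\infty,\infty)$ that is bounded above and whose set of finite values has total weight strictly greater than $n$. Here the points $0$ and $1$ each have weight $1/2$ and every point of $(0,1)$ has weight $1$. $\overline S=\{\mathbf y\in\mathbb R^n:0\le y_1\le\dots\le y_n\le1\}$. $F(\mathbf y,t)=J(t)+\sum_{i=1}^nK_i(t-y_i)$, with the convention $a+(-\infty)=-\infty$. Set $y_0:=0$ and $y_{n+1}:=1$. For $j=0,\dots,n$ let $I_j(\mathbf y)=[y_j,y_{j+1}]$ and $m_j(\mathbf y)=\sup_{t\in I_j(\mathbf y)}F(\mathbf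 y,t)$. $\|\mathbf v\|=\max_i|v_i|$. *)

From HB Require Import structures.
From mathcomp Require Import all_boot all_order all_algebra.
From mathcomp Require Import all_classical all_reals all_analysis.
Set Implicit Arguments. Unset Strict Implicit. Unset Printing Implicit Defensive.
Import Order.TTheory GRing.Theory Num.Theory.
Import numFieldNormedType.Exports.
Local Open Scope classical_set_scope.
Local Open Scope ring_scope.

Section Defs.
Variable R : realType.

Definition concave_on (k : R -> R) (a b : R) : Prop :=
  forall x y l, a < x < b -> a < y < b -> 0 <= l <= 1 ->
    l * k x + (1 - l) * k y <= k (l * x + (1 - l) * y).

(* A kernel function, already extended to [-1,1] with values in [-oo,oo):
   K is real-valued (finite) on (-1,0) u (0,1), concave on each of these
   intervals, and its values at -1, 0, 1 are the one-sided limits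
   (the left and right limits at 0 both equal K 0).  Values outside
   [-1,1] are irrelevant. *)
Definition is_kernel (K : R -> \bar R) : Prop :=
  [/\ (forall t, (-1 < t < 0) \/ (0 < t < 1) -> K t \is a fin_num),
      concave_on (fun t => fine (K t)) (-1) 0 &
      concave_on (fun t => fine (K t)) 0 1] /\
  [/\ K x @[x --> (-1)^'+] --> K (-1),
      K x @[x --> 0^'-] --> K 0,
      K x @[x --> 0^'+] --> K 0 &
      K x @[x --> 1^'-] --> K 1].

Definition is_singular_kernel (K : R -> \bar R) : Prop :=
  is_kernel K /\ K 0 = -oo%E.

Definition weight (t : R) : R := if (t == 0) || (t == 1) then 2^-1 else 1.

(* n-field function J : [0,1] -> [-oo,oo), bounded above, whose set of
   finite values has total weight > n (i.e. some finite subset of it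
   already has weight > n; this covers the infinite case). *)
Definition is_field_function (n : nat) (J : R -> \bar R) : Prop :=
  (exists M : R, forall t, 0 <= t <= 1 -> (J t <= M%:E)%E) /\
  (exists s : seq R, [/\ uniq s,
      (forall t, t \in s -> 0 <= t <= 1 /\ J t \is a fin_num) &
      n%:R < \sum_(t <- s) weight t]).

Definition in_Sbar (n : nat) (y : 'I_n -> R) : Prop :=
  (forall i, 0 <= y i <= 1) /\ (forall i j : 'I_n, (i <= j)%N -> y i <= y j).

(* y_k with the conventions y_0 = 0, y_{n+1} = 1 (1-based indexing of y) *)
Definition yext (n : nat) (y : 'I_n -> R) (k : nat) : R :=
  match k with
  | 0 => 0
  | k'.+1 => match @insub nat (fun m => (m < n)%N) 'I_n k' with
             | Some i => y i
             | None => 1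
             end
  end.

Definition F_val (n : nat) (J : R -> \bar R) (K : 'I_n -> R -> \bar R)
  (y : 'I_n -> R) (t : R) : \bar R :=
  (J t + \sum_(i < n) K i (t - y i)%R)%E.

Definition Iint (n : nat) (y : 'I_n -> R) (j : nat) : set R :=
  [set t | yext y j <= t <= yext y j.+1].

Definition m_val (n : nat) (J : R -> \bar R) (K : 'I_n -> R -> \bar R)
  (y : 'I_n -> R) (j : nat) : \bar R :=
  ereal_sup (F_val J K y @` Iint y j).

End Defs.

From HB Require Import structures.
From mathcomp Require Import all_boot all_order all_algebra.
From mathcomp Require Import all_classical all_reals all_analysis.
From mathcomp Require Import ring lra.
Set Implicit Arguments. Unset Strict Implicit. Unset Printing Implicit Defensive.
Import Order.TTheory GRing.Theory Num.Theory.
Import numFieldNormedType.Exports.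
Local Open Scope classical_set_scope.
Local Open Scope ring_scope.

(* Since m_j(y) > -oo, some t0 in I_j(y) has F(y, t0) > -oo; then J(t0) is
   finite and t0 differs from every node y_i, because the kernels are singular.
   Two uniform estimates follow from the kernel axioms:
   - lower bound: F(x, t0) >= L for all x near y, because a concave kernel is
     locally bounded below away from its pole (F_lower_bound_near);
   - pole: F(x, t) <= L - 1 whenever t is within some rho > 0 of a node x_p,
     because J and all kernels are bounded above while K_p -> -oo at 0
     (F_small_near_nodes).
   Pick d > 0 small with 4d <= rho and t0 at distance >= 3d from the nodes y_i.
   The window W = [y_j + 3d, y_{j+1} - 3d] (with the fixed ends 0 resp. 1 when
   j = 0 resp. j = n) contains t0, lies in I_j(x) at distance >= d from all
   nodes for every x within d of y, and every other point of I_j(x) is within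
   4d of a node (window_spec).  There F(x, .) <= L - 1 < F(x, t0), so the
   supremum over I_j(x) equals the supremum over W (ereal_sup_restrict). *)

Section Concave.
Variables (R : realType) (f : R -> R) (a b : R).
Hypothesis f_concave : concave_on f a b.

Lemma concave_chord al u be : a < al -> al <= u -> u <= be -> be < b -> al < be ->
  (be - u) * f al + (u - al) * f be <= (be - al) * f u.
Proof.
move=> aal alu ube beb albe.
have d0 : 0 < be - al by rewrite subr_gt0.
set l := (be - u) / (be - al).
have l01 : 0 <= l <= 1.
  by apply/andP; split; [apply: divr_ge0; lra | rewrite /l ler_pdivrMr // mul1r; lra].
have ul : l * al + (1 - l) * be = u by rewrite /l; field; lra.
have fu : l * f al + (1 - l) * f be <= f u.
  by rewrite -ul; apply: f_concave => //; apply/andP; split; lra.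
have -> : (be - u) * f al + (u - al) * f be
        = (be - al) * (l * f al + (1 - l) * f be) by rewrite /l; field; lra.
by rewrite ler_pM2l.
Qed.

Lemma concave_ge_min al be u : a < al -> al <= u <= be -> be < b ->
  Num.min (f al) (f be) <= f u.
Proof.
move=> aal /andP[alu ube] beb.
have [albe|] := ltP al be; last first.
  move=> beal; have -> : u = al by lra.
  by rewrite ge_min lexx.
have := concave_chord aal alu ube beb albe.
have m1 : Num.min (f al) (f be) <= f al by rewrite ge_min lexx.
have m2 : Num.min (f al) (f be) <= f be by rewrite ge_min lexx orbT.
move: m1 m2; set m := Num.min _ _ => m1 m2; nra.
Qed.

Lemma concave_locally_bounded_below s : a < s < b ->
  exists L, \forall u \near s, a < u < b /\ L <= f u.
Proof.
move=> /andP[lt_as sb].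
have [m [m0 ma mb]] : exists m, [/\ 0 < m, m < s - a & m < b - s].
  exists (Num.min (s - a) (b - s) / 2).
  have : 0 < Num.min (s - a) (b - s) by rewrite lt_min !subr_gt0 lt_as sb.
  have : Num.min (s - a) (b - s) <= s - a by rewrite ge_min lexx.
  have : Num.min (s - a) (b - s) <= b - s by rewrite ge_min lexx orbT.
  move=> *; split; lra.
exists (Num.min (f (s - m)) (f (s + m))).
apply/nbhs_normP; exists m => //= u; rewrite /ball_ /= distrC ltr_norml => /andP[u1 u2].
split; first by apply/andP; split; lra.
by apply: concave_ge_min; [lra | apply/andP; split; lra | lra].
Qed.

(* A concave function on a bounded open interval is bounded above: a point far
   from one end is controlled by extrapolating a chord taken near the other end. *)
Lemma concave_bounded_above : a < b -> exists C, forall s, a < s < b -> f s <= C.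
Proof.
move=> ab; set h := (b - a) / 5.
have h0 : 0 < h by rewrite /h divr_gt0 // subr_gt0.
have eD : b - a = 5 * h by rewrite /h; field.
clearbody h.
exists (4 * `|f (a + 2 * h)| + 3 * `|f (a + h)|
      + 4 * `|f (a + 3 * h)| + 3 * `|f (a + 4 * h)|) => s /andP[lt_as sb].
have N0 x := normr_ge0 (f x).
have Nle x : f x <= `|f x| by exact: ler_norm.
have Nge x : - `|f x| <= f x by rewrite lerNl -normrN ler_norm.
have [s2|s2] := ltrP (a + 2 * h) s.
  have := @concave_chord (a + h) (a + 2 * h) s.
  move=> /(_ ltac:(lra) ltac:(lra) ltac:(lra) ltac:(lra) ltac:(lra)).
  move: (N0 (a + 3 * h)) (N0 (a + 4 * h)) (Nle (a + 2 * h)) (Nge (a + h)).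
  move: (N0 (a + h)) (N0 (a + 2 * h)); nra.
have := @concave_chord s (a + 3 * h) (a + 4 * h).
move=> /(_ ltac:(lra) ltac:(lra) ltac:(lra) ltac:(lra) ltac:(lra)).
move: (N0 (a + h)) (N0 (a + 2 * h)) (Nle (a + 3 * h)) (Nge (a + 4 * h)).
move: (N0 (a + 3 * h)) (N0 (a + 4 * h)); nra.
Qed.

End Concave.

Section Kernel.
Variable R : realType.
Implicit Types (K : R -> \bar R) (s : R).

Lemma kernel_finite K s : is_kernel K -> (-1 < s < 0) \/ (0 < s < 1) ->
  K s = (fine (K s))%:E.
Proof. by move=> [[Kfin _ _] _] /Kfin /fineK. Qed.

Lemma within_limit_lower_bound (g : R -> \bar R) (D : set R) s (L : R) :
  g x @[x --> within D (nbhs s)] --> g s -> (L%:E < g s)%E ->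
  \forall u \near s, D u \/ u = s -> (L%:E <= g u)%E.
Proof.
move=> glim Lgs.
have : \forall u \near within D (nbhs s), (L%:E < g u)%E := glim _ (open_ereal_gt' Lgs).
rewrite near_withinE; apply: filterS => u Lgu [/Lgu/ltW //|->]; exact: ltW.
Qed.

(* A kernel is bounded below near every point of [-1, 1] other than 0 where
   it is finite: by concavity inside (-1, 0) and (0, 1), and by the one-sided
   limits at the endpoints -1 and 1. *)
Lemma kernel_locally_bounded_below K s : is_kernel K ->
  -1 <= s <= 1 -> s != 0 -> K s != -oo%E ->
  exists L : R, \forall u \near s, -1 <= u <= 1 -> (L%:E <= K u)%E.
Proof.
move=> Kk /andP[s1 s2] s0 Ks.
have [L LKs] : exists L : R, (L%:E < K s)%E.
  move: Ks; case: (K s) => [r _ | _ | //]; last by exists 0; rewrite ltry.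
  by exists (r - 1); rewrite lte_fin; lra.
have [[_ Kc1 Kc2] [Klim1 _ _ Klim2]] := Kk.
have [sN1|sN1|sE] := ltrgtP s (-1); first (exfalso; lra); last first.
  subst s; exists L; apply: filterS (within_limit_lower_bound Klim1 LKs) => u Lu /andP[u1 _].
  by apply: Lu; case: (ltrgtP u (-1)) => //; lra.
have [sP1|sP1|sE] := ltrgtP s 1; [ | exfalso; lra | ]; last first.
  subst s; exists L; apply: filterS (within_limit_lower_bound Klim2 LKs) => u Lu /andP[_ u1].
  by apply: Lu; case: (ltrgtP u 1) => //; lra.
have [sneg|spos] : (-1 < s < 0) \/ (0 < s < 1).
  by case: (ltrgtP s 0) s0 => // ? _; [left | right]; apply/andP.
- have [L' near_s] := concave_locally_bounded_below Kc1 sneg.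
  exists L'; apply: filterS near_s => u [u_in Lu] _.
  by rewrite (kernel_finite Kk (or_introl u_in)) lee_fin.
- have [L' near_s] := concave_locally_bounded_below Kc2 spos.
  exists L'; apply: filterS near_s => u [u_in Lu] _.
  by rewrite (kernel_finite Kk (or_intror u_in)) lee_fin.
Qed.

(* A kernel is bounded above on [-1, 1]: on each open half by concavity, and at
   -1, 0, 1 because its values there are limits of values in the open halves. *)
Lemma kernel_bounded_above K : is_kernel K ->
  exists C : R, forall s, -1 <= s <= 1 -> (K s <= C%:E)%E.
Proof.
move=> Kk; have [[_ Kc1 Kc2] [Klim1 Klim0 _ Klim2]] := Kk.
have [C1 C1ub] := concave_bounded_above Kc1 (ltrN10 R).
have [C2 C2ub] := concave_bounded_above Kc2 (@ltr01 R).
pose C := Num.max C1 C2.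
have Kub s : (-1 < s < 0) \/ (0 < s < 1) -> (K s <= C%:E)%E.
  move=> s_in; rewrite (kernel_finite Kk s_in) lee_fin le_max.
  by case: s_in => [/C1ub|/C2ub] ->; rewrite ?orbT.
exists C => s /andP[s1 s2].
have [sneg|spos|->] := ltrgtP s 0.
- have [sN1|sN1|->] := ltrgtP s (-1); first (exfalso; lra).
    by apply: Kub; left; apply/andP.
  apply: (cvge_to_le Klim1); near=> u; apply: Kub; left; apply/andP; split.
    by near: u; exact: nbhs_right_gt.
  by near: u; apply: nbhs_right_lt; lra.
- have [sP1|sP1|->] := ltrgtP s 1; [by apply: Kub; right; apply/andP | exfalso; lra | ].
  apply: (cvge_to_le Klim2); near=> u; apply: Kub; right; apply/andP; split.
    by near: u; apply: nbhs_left_gt; lra.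
  by near: u; exact: nbhs_left_lt.
- apply: (cvge_to_le Klim0); near=> u; apply: Kub; left; apply/andP; split.
    by near: u; apply: nbhs_left_gt; lra.
  by near: u; exact: nbhs_left_lt.
Unshelve. all: by end_near.
Qed.

Lemma singular_kernel_pole K (B : R) : is_singular_kernel K ->
  \forall s \near 0, (K s <= B%:E)%E.
Proof.
move=> [[_ [_ Klim0l Klim0r _]] K0].
have : K x @[x --> 0] --> K 0 by apply/left_right_continuousP.
by rewrite K0 => /cvgeNy_le; apply.
Qed.

End Kernel.

Section Simplex.
Variables (R : realType) (n : nat).
Implicit Types x y : 'I_n -> R.

Lemma yext_node x k (k_lt : (k < n)%N) : yext x k.+1 = x (Ordinal k_lt).
Proof. by rewrite /yext insubT. Qed.

Lemma yext_last x k : (n <= k)%N -> yext x k.+1 = 1.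
Proof. by move=> nk; rewrite /yext insubF // ltnNge nk. Qed.

Lemma yext_01 x k : in_Sbar x -> 0 <= yext x k <= 1.
Proof.
move=> [x01 _]; case: k => [|k]; first by rewrite /= lexx ler01.
by case: (ltnP k n) => kn; [rewrite yext_node | rewrite yext_last // lexx ler01].
Qed.

Lemma Iint_01 x (j : nat) t : in_Sbar x -> Iint x j t -> 0 <= t <= 1.
Proof.
move=> xS /andP[t1 t2]; have /andP[? _] := yext_01 j xS.
by have /andP[_ ?] := yext_01 j.+1 xS; apply/andP; split; lra.
Qed.

Definition window_lo y (j : nat) (d : R) : R :=
  if j is 0 then 0 else yext y j + 3 * d.

Definition window_hi y (j : nat) (d : R) : R :=
  if (j < n)%N then yext y j.+1 - 3 * d else 1.

Lemma window_lo_spec x y (j : nat) d : (j <= n)%N -> in_Sbar x ->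
  (forall i, `|x i - y i| <= d) ->
  [/\ yext x j <= window_lo y j d,
      forall t (i : 'I_n), window_lo y j d <= t -> (i < j)%N -> 2 * d <= t - x i &
      forall t, yext x j <= t < window_lo y j d -> exists p, `|t - x p| <= 4 * d].
Proof.
case: j => [_ _ _|k k_lt [_ x_mono] xy].
  by split=> // t /andP[]; rewrite /window_lo /yext; lra.
rewrite /window_lo !yext_node; set p := Ordinal k_lt.
have := xy p; rewrite ler_norml => /andP[xp1 xp2].
split; [lra | move=> t i pt ik | move=> t /andP[pt tp]].
  by have := x_mono i p ik; lra.
by exists p; rewrite ger0_norm; lra.
Qed.

Lemma window_hi_spec x y (j : nat) d : in_Sbar x -> (forall i, `|x i - y i| <= d) ->
  [/\ window_hi y j d <= yext x j.+1,
      forall t (i : 'I_n), t <= window_hi y j d -> ~~ (i < j)%N -> 2 * d <= x i - t &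
      forall t, window_hi y j d < t <= yext x j.+1 -> exists p, `|t - x p| <= 4 * d].
Proof.
move=> [_ x_mono] xy; rewrite /window_hi; case: (ltnP j n) => jn; last first.
  rewrite yext_last //; split=> // [t i _|t /andP[]]; last lra.
  by rewrite -leqNgt => ji; have := leq_trans jn ji; rewrite leqNgt ltn_ord.
rewrite !yext_node; set p := Ordinal jn.
have := xy p; rewrite ler_norml => /andP[xp1 xp2].
split; [lra | move=> t i tp ij | move=> t /andP[pt tp]].
  by rewrite -leqNgt in ij; have := x_mono p i ij; lra.
by exists p; rewrite ler0_norm; lra.
Qed.

Lemma window_bounds y (j : nat) t0 d : (j <= n)%N -> in_Sbar y -> Iint y j t0 ->
  0 <= d -> (forall i, 3 * d <= `|t0 - y i|) ->
  [/\ 0 <= window_lo y j d, window_lo y j d <= t0,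
      t0 <= window_hi y j d & window_hi y j d <= 1].
Proof.
move=> jn yS t0I d0 gap; have /andP[t0_0 t0_1] := Iint_01 yS t0I.
case/andP: t0I => t0l t0h.
have lo : 0 <= window_lo y j d <= t0.
  rewrite /window_lo; case: j jn t0l {t0h} => [|k] k_lt t0l; first by rewrite lexx.
  move: t0l; rewrite yext_node => t0l; have /andP[? _] := (yS.1 (Ordinal k_lt)).
  have := gap (Ordinal k_lt); rewrite ger0_norm ?subr_ge0 // => ?.
  by apply/andP; split; lra.
have hi : t0 <= window_hi y j d <= 1.
  move: t0h; rewrite /window_hi; case: (ltnP j n) => j_lt; last by rewrite t0_1 lexx.
  rewrite yext_node => t0h; have /andP[_ ?] := (yS.1 (Ordinal j_lt)).
  have := gap (Ordinal j_lt); rewrite ler0_norm ?subr_le0 // => ?.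
  by apply/andP; split; lra.
by move: lo hi => /andP[? ?] /andP[? ?].
Qed.

Lemma window_spec x y (j : 'I_n.+1) d : in_Sbar x -> (forall i, `|x i - y i| <= d) ->
  0 <= d ->
  [/\ [set t | window_lo y j d <= t <= window_hi y j d] `<=` Iint x j,
      forall t, window_lo y j d <= t <= window_hi y j d -> forall i, d <= `|t - x i| &
      forall t, Iint x j t -> ~ (window_lo y j d <= t <= window_hi y j d) ->
        exists p, `|t - x p| <= 4 * d].
Proof.
move=> xS xy d0.
have [lo_le lo_far lo_near] := window_lo_spec (ltn_ord j) xS xy.
have [hi_ge hi_far hi_near] := window_hi_spec j xS xy.
split.
- move=> t /andP[tl th]; apply/andP; split; [exact: le_trans tl | exact: le_trans hi_ge].
- move=> t /andP[tl th] i; case: (boolP (i < j)%N) => ij.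
    by move: (lo_far t i tl ij) => far; rewrite ger0_norm; lra.
  by move: (hi_far t i th ij) => far; rewrite distrC ger0_norm; lra.
- move=> t /andP[tl th] tW; have [tlo|tlo] := ltrP t (window_lo y j d).
    by apply: lo_near; rewrite tl tlo.
  apply: hi_near; rewrite th andbT ltNge; apply/negP => thi.
  by apply: tW; rewrite tlo thi.
Qed.

End Simplex.

Section Extended.
Variable R : realType.

Lemma near_radius (s : R) (Q : R -> Prop) : (\forall u \near s, Q u) ->
  \forall d \near 0^'+, forall u, `|u - s| <= d -> Q u.
Proof.
move=> /nbhs_normP[e /= e0 sQ]; near=> d => u us; apply: sQ.
rewrite /ball_ /= distrC (le_lt_trans us) //; near: d; exact: nbhs_right_lt.
Unshelve. all: by end_near.
Qed.

Lemma near_scaled_le (k c : R) : 0 < k -> 0 < c -> \forall d \near 0^'+, k * d <= c.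
Proof.
move=> k0 c0; near=> d; rewrite -ler_pdivlMl //; apply/ltW.
by near: d; apply: nbhs_right_lt; rewrite mulr_gt0 ?invr_gt0.
Unshelve. all: by end_near.
Qed.

Lemma ereal_sup_image_neqNy (T : Type) (f : T -> \bar R) (A : set T) :
  ereal_sup (f @` A) <> -oo%E -> exists2 t, A t & f t != -oo%E.
Proof.
move=> supA; apply: contrapT => nex; apply/supA/ereal_sup_ninfty => _ [t At <-].
by apply/eqP/negPn/negP => ft; apply: nex; exists t.
Qed.

Lemma ereal_sup_restrict (T : Type) (f : T -> \bar R) (I W : set T) (t0 : T) :
  W `<=` I -> W t0 -> (forall t, I t -> ~ W t -> (f t <= f t0)%E) ->
  ereal_sup (f @` I) = ereal_sup (f @` W).
Proof.
move=> WI Wt0 f_out; apply/eqP; rewrite eq_le; apply/andP; split; last first.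
  by apply: ereal_sup_le; exact: image_subset.
apply: ge_ereal_sup => _ [t It <-]; have [Wt|nWt] := pselect (W t).
  by apply: ereal_sup_ubound; exists t.
by apply: le_trans (f_out _ It nWt) _; apply: ereal_sup_ubound; exists t0.
Qed.

End Extended.

Section FieldFunction.
Variables (R : realType) (n : nat) (K : 'I_n -> R -> \bar R) (J : R -> \bar R) (M : R).
Hypothesis K_sing : forall i, is_singular_kernel (K i).
Hypothesis J_ub : forall t, 0 <= t <= 1 -> (J t <= M%:E)%E.
Implicit Types (x y : 'I_n -> R) (t : R).

Lemma kernel_arg_range x t (i : 'I_n) : in_Sbar x -> 0 <= t <= 1 -> -1 <= t - x i <= 1.
Proof. by move=> [x01 _] /andP[? ?]; have /andP[? ?] := x01 i; apply/andP; split; lra. Qed.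

Lemma F_finite_terms x t : F_val J K x t != -oo%E ->
  J t != -oo%E /\ forall i, K i (t - x i) != -oo%E.
Proof.
rewrite /F_val; apply: contraNP => /not_andP[/negP/negPn/eqP->|]; first by rewrite addNye.
move=> /existsNP[i /negP/negPn/eqP Ki]; suff -> : (\sum_(i < n) K i (t - x i) = -oo)%E.
  by rewrite addeNy.
by apply/eqP; rewrite esum_eqNy; apply/existsP; exists i; rewrite Ki.
Qed.

Lemma F_finite_off_nodes x t : F_val J K x t != -oo%E -> forall i, t != x i.
Proof.
move=> /F_finite_terms[_ Kt] i; apply: contraNneq (Kt i) => ->.
by rewrite subrr (K_sing i).2.
Qed.

(* Lower semicontinuity in the nodes: if F(y, t0) is finite, F(x, t0) stays
   above a fixed real for all x close to y, since t0 avoids the poles y_i. *)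
Lemma F_lower_bound_near y t0 : in_Sbar y -> 0 <= t0 <= 1 -> F_val J K y t0 != -oo%E ->
  exists L : R, \forall d \near 0^'+, forall x, in_Sbar x ->
    (forall i, `|x i - y i| <= d) -> (L%:E <= F_val J K x t0)%E.
Proof.
move=> yS t01 Fyt0; have [Jt0 Kt0] := F_finite_terms Fyt0.
have Jfin : J t0 \is a fin_num.
  by rewrite fin_numE Jt0 /=; apply/eqP => Jy; have := J_ub t01; rewrite Jy.
have Kloc i : exists L : R, \forall u \near t0 - y i, -1 <= u <= 1 -> (L%:E <= K i u)%E.
  apply: kernel_locally_bounded_below (K_sing i).1 (kernel_arg_range i yS t01) _ (Kt0 i).
  by rewrite subr_eq0 (F_finite_off_nodes Fyt0).
have [L L_near] := choice Kloc.
exists (fine (J t0) + \sum_(i < n) L i).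
have L_near_all : \forall d \near 0^'+, forall i u, `|u - (t0 - y i)| <= d ->
    -1 <= u <= 1 -> ((L i)%:E <= K i u)%E.
  by apply: filter_forall => i; exact: near_radius.
apply: filterS L_near_all => d Ld x xS xy.
rewrite /F_val EFinD (fineK Jfin) -sumEFin; apply: leeD => //.
apply: lee_sum => i _; apply: Ld (kernel_arg_range i xS t01).
by rewrite (_ : _ - _ = - (x i - y i)) ?normrN //; ring.
Qed.

(* Near any node x_p the pole of K_p drags F(x, .) below any prescribed bound,
   uniformly in x, since J and the other kernels are bounded above. *)
Lemma F_small_near_nodes (B : R) : exists2 rho : R, 0 < rho &
  forall x, in_Sbar x -> forall (p : 'I_n) t, 0 <= t <= 1 -> `|t - x p| <= rho ->
    (F_val J K x t <= B%:E)%E.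
Proof.
have [C C_ub] := choice (fun i => kernel_bounded_above (K_sing i).1).
pose Bp p := B - M - \sum_(i < n | i != p) C i.
have pole p := near_radius (singular_kernel_pole (Bp p) (K_sing p)).
have [rho [rho0 rho_pole]] : exists rho : R, 0 < rho /\
    forall p u, `|u - 0| <= rho -> (K p u <= (Bp p)%:E)%E.
  apply: (@filter_ex _ (at_right (0 : R))); near=> rho; split.
    by near: rho; exact: nbhs_right_gt.
  by near: rho; exact: filter_forall pole.
exists rho => // x xS p t t01 tp.
have Jt := J_ub t01.
have Kp : (K p (t - x p) <= (Bp p)%:E)%E by apply: rho_pole; rewrite subr0.
have Ki : (\sum_(i < n | i != p) K i (t - x i) <= \sum_(i < n | i != p) (C i)%:E)%E.
  by apply: lee_sum => i _; apply: C_ub; exact: kernel_arg_range.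
rewrite /F_val (bigD1 p) //=; apply: le_trans (leeD Jt (leeD Kp Ki)) _.
by rewrite sumEFin -!EFinD lee_fin /Bp; lra.
Unshelve. all: by end_near.
Qed.

End FieldFunction.

Theorem lemma3p2 (R : realType) (n : nat) (K : 'I_n -> R -> \bar R)
  (J : R -> \bar R) (y : 'I_n -> R) (j : 'I_n.+1) :
  (forall i, is_singular_kernel (K i)) ->
  is_field_function n J ->
  in_Sbar y ->
  m_val J K y j <> -oo%E ->
  exists (delta : R) (a b : R),
    [/\ 0 < delta, 0 <= a, a <= b, b <= 1 &
      forall x : 'I_n -> R, in_Sbar x ->
        (forall i, `|x i - y i| <= delta) ->
        [/\ [set t | a <= t <= b] `<=` Iint x j,
            (forall t, a <= t <= b -> forall i, delta <= `|t - x i|) &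
            m_val J K x j = ereal_sup (F_val J K x @` [set t | a <= t <= b])]].
Proof.
move=> K_sing [[M J_ub] _] yS m_fin.
have [t0 t0I Fyt0] := ereal_sup_image_neqNy m_fin.
have t01 := Iint_01 yS t0I.
have [L L_near] := F_lower_bound_near K_sing J_ub yS t01 Fyt0.
have [rho rho0 pole] := F_small_near_nodes K_sing J_ub (L - 1).
have gap_near : \forall d \near 0^'+, forall i, 3 * d <= `|t0 - y i|.
  apply: filter_forall => i; apply: near_scaled_le => //.
  by rewrite normr_gt0 subr_eq0 (F_finite_off_nodes K_sing Fyt0).
have [d [d0 L_low gap d_rho]] : exists d : R, [/\ 0 < d,
    forall x, in_Sbar x -> (forall i, `|x i - y i| <= d) -> (L%:E <= F_val J K x t0)%E,
    forall i, 3 * d <= `|t0 - y i| & 4 * d <= rho].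
  apply: (@filter_ex _ (at_right (0 : R))); near=> d; split.
  - by near: d; exact: nbhs_right_gt.
  - by near: d.
  - by near: d.
  - by near: d; exact: near_scaled_le.
exists d, (window_lo y j d), (window_hi y j d).
have [lo0 lo_t0 t0_hi hi1] :=
  window_bounds (ltn_ord j : (j <= n)%N) yS t0I (ltW d0) gap.
split => //; first exact: le_trans lo_t0 t0_hi.
move=> x xS xy; have [W_sub W_far W_out] := window_spec j xS xy (ltW d0).
split => //; apply: (ereal_sup_restrict (t0 := t0) W_sub); first by apply/andP.
move=> t tI tW; have [p tp] := W_out t tI tW.
apply: le_trans (pole x xS p t (Iint_01 xS tI) (le_trans tp d_rho)) _.
by apply: le_trans (L_low x xS xy); rewrite lee_fin lerBlDr lerDl.
Unshelve. all: by end_near.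
Qed.
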